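(* Let a nondegenerate triangle with circumradius $R$ be circumscribed about an ellipse with linear eccentricity $c$ whose center coincides with the circumcenter of the triangle. Then the triangle is acute if and only if $R>c$, and it is obtuse if and only if $R<c$.
   Context: The linear eccentricity of an ellipse is half the distance between its foci. A triangle is circumscribed about a conic if each of its three sidelines is tangent to the conic. *)

From Stdlib Require Import Reals.
Open Scope R_scope.

Definition point := (R * R)%type.

Definition edist (P Q : point) : R :=
  sqrt ((fst P - fst Q)^2 + (snd P - snd Q)^2).

Definition dotv (V P Q : point) : R :=
  (fst P - fst V) * (fst Q - fst V) + (snd P - snd V) * (snd Q - snd V).

Definition noncollinear (A B C : point) : Prop :=
  (fst B - fst A) * (snd C - snd A) - (snd B - snd A) * (fst C - fst A) <> 0.

Definition on_line (P Q X : point) : Prop :=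
  (fst Q - fst P) * (snd X - snd P) - (snd Q - snd P) * (fst X - fst P) = 0.

(* Ellipse with foci F1, F2 and semi-major axis a (requires edist F1 F2 < 2a). *)
Definition is_ellipse (F1 F2 : point) (a : R) : Prop := edist F1 F2 < 2 * a.
Definition on_ellipse (F1 F2 : point) (a : R) (X : point) : Prop :=
  edist X F1 + edist X F2 = 2 * a.

Definition center (F1 F2 : point) : point :=
  ((fst F1 + fst F2) / 2, (snd F1 + snd F2) / 2).

Definition linear_eccentricity (F1 F2 : point) : R := edist F1 F2 / 2.

Definition tangent_line (P Q F1 F2 : point) (a : R) : Prop :=
  exists X, on_line P Q X /\ on_ellipse F1 F2 a X /\
    forall Y, on_line P Q Y -> on_ellipse F1 F2 a Y -> Y = X.

Definition circumscribed_about (A B C F1 F2 : point) (a : R) : Prop :=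
  tangent_line A B F1 F2 a /\ tangent_line B C F1 F2 a /\ tangent_line C A F1 F2 a.

Definition is_circumcenter (A B C O : point) : Prop :=
  edist O A = edist O B /\ edist O B = edist O C.

(* Angle at vertex V is acute/obtuse iff cos of the angle (sign of dot product) is >0 / <0. *)
Definition acute_triangle (A B C : point) : Prop :=
  0 < dotv A B C /\ 0 < dotv B C A /\ 0 < dotv C A B.
Definition obtuse_triangle (A B C : point) : Prop :=
  dotv A B C < 0 \/ dotv B C A < 0 \/ dotv C A B < 0.

(* Put the circumcenter at the origin, let the circumcircle be |z|^2 = r and the
   foci be +f and -f, so that c = |f|.  For a tangent line, the product of the
   signed distances of the two foci to the line is the squared semi-minor axis
   a^2 - c^2.  Read with complex numbers, this condition for a chord z1 z2 of the
   circumcircle is linear in f^2, and the resulting linear conditions for the three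
   sides force f^2 = -(z1 z2 + z2 z3 + z3 z1).  Hence c^4 = r |z1 + z2 + z3|^2,
   i.e. c^2 = R * OH where H = z1 + z2 + z3 is the orthocenter.  Finally, the
   product of the three angle cosines has the sign of R^2 - OH^2, and at most one
   angle of a triangle is not acute, so the triangle is acute iff c < R and obtuse
   iff c > R. *)

From Stdlib Require Import Reals Lra Psatz Nsatz Rgeom.
Open Scope R_scope.

Definition vsub (u v : point) : point := (fst u - fst v, snd u - snd v).
Definition vadd (u v : point) : point := (fst u + fst v, snd u + snd v).
Definition vopp (u : point) : point := (- fst u, - snd u).
Definition dot (u v : point) : R := fst u * fst v + snd u * snd v.
Definition cross (u v : point) : R := fst u * snd v - snd u * fst v.
Definition norm2 (u : point) : R := dot u u.
Definition cmul (u v : point) : point :=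
  (fst u * fst v - snd u * snd v, fst u * snd v + snd u * fst v).
Definition side (P Q X : point) : R := cross (vsub Q P) (vsub X P).
Definition lerp (U V : point) (t : R) : point :=
  (fst U + t * (fst V - fst U), snd U + t * (snd V - snd U)).

Lemma on_line_side P Q X : on_line P Q X <-> side P Q X = 0.
Proof. reflexivity. Qed.

Lemma vsub_vsub P Q O : vsub (vsub P O) (vsub Q O) = vsub P Q.
Proof. unfold vsub; cbn; f_equal; ring. Qed.

Lemma vsub_inj P Q O : P <> Q -> vsub P O <> vsub Q O.
Proof.
  destruct P, Q, O; unfold vsub; cbn; intros HPQ E.
  injection E as E1 E2; apply HPQ; f_equal; lra.
Qed.

Lemma norm2_nonneg u : 0 <= norm2 u.
Proof. unfold norm2, dot; nra. Qed.

Lemma norm2_eq0 u : norm2 u = 0 -> u = (0, 0).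
Proof.
  destruct u as [x y]; unfold norm2, dot; cbn; intros H.
  assert (x * x = 0 /\ y * y = 0) as [Hx Hy] by nra.
  f_equal; nra.
Qed.

Lemma norm2_vsub_pos P Q : P <> Q -> 0 < norm2 (vsub P Q).
Proof.
  destruct P as [p1 p2], Q as [q1 q2]; unfold norm2, dot, vsub; cbn; intros Hne.
  destruct (Req_dec p1 q1); [destruct (Req_dec p2 q2)|].
  - subst; now destruct Hne.
  - apply Rplus_le_lt_0_compat; [apply Rle_0_sqr | apply Rsqr_pos_lt; lra].
  - apply Rplus_lt_le_0_compat; [apply Rsqr_pos_lt; lra | apply Rle_0_sqr].
Qed.

Lemma edist_norm2 P Q : edist P Q = sqrt (norm2 (vsub P Q)).
Proof. unfold edist, norm2, dot, vsub; cbn; f_equal; ring. Qed.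

Lemma edist_sqr P Q : edist P Q * edist P Q = norm2 (vsub P Q).
Proof. rewrite edist_norm2; apply sqrt_sqrt, norm2_nonneg. Qed.

Lemma edist_dist_euc P Q : edist P Q = dist_euc (fst P) (snd P) (fst Q) (snd Q).
Proof. unfold edist, dist_euc, Rsqr; f_equal; ring. Qed.

Lemma edist_sym P Q : edist P Q = edist Q P.
Proof. rewrite !edist_dist_euc; apply distance_symm. Qed.

Lemma edist_triangle P Q S : edist P S <= edist P Q + edist Q S.
Proof. rewrite !edist_dist_euc; apply triangle. Qed.

Lemma edist_refl P : edist P P = 0.
Proof. rewrite edist_dist_euc; apply distance_refl. Qed.

Lemma edist_nonneg P Q : 0 <= edist P Q.
Proof. apply sqrt_pos. Qed.

Lemma edist_pos P Q : P <> Q -> 0 < edist P Q.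
Proof. intros; rewrite edist_norm2; now apply sqrt_lt_R0, norm2_vsub_pos. Qed.

Lemma edist_norm2_rev O P : edist O P = sqrt (norm2 (vsub P O)).
Proof. now rewrite edist_sym, edist_norm2. Qed.

Lemma norm2_eq_of_edist_eq O P Q :
  edist O P = edist O Q -> norm2 (vsub P O) = norm2 (vsub Q O).
Proof.
  rewrite !edist_norm2_rev; intros E.
  apply sqrt_inj; auto using norm2_nonneg.
Qed.

Lemma lerp_1 U V : lerp U V 1 = V.
Proof. destruct V; unfold lerp; cbn; f_equal; ring. Qed.

Lemma edist_lerp_l U V t : edist (lerp U V t) U = Rabs t * edist U V.
Proof.
  rewrite !edist_norm2, <- sqrt_Rsqr_abs, <- sqrt_mult_alt by apply Rle_0_sqr.
  f_equal; unfold norm2, dot, vsub, lerp, Rsqr; cbn; ring.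
Qed.

Lemma edist_lerp_r U V t : edist (lerp U V t) V = Rabs (1 - t) * edist U V.
Proof.
  rewrite !edist_norm2, <- sqrt_Rsqr_abs, <- sqrt_mult_alt by apply Rle_0_sqr.
  f_equal; unfold norm2, dot, vsub, lerp, Rsqr; cbn; ring.
Qed.

Lemma edist_lerp_segment U V t : 0 <= t <= 1 ->
  edist (lerp U V t) U + edist (lerp U V t) V = edist U V.
Proof.
  intros Ht; rewrite edist_lerp_l, edist_lerp_r, !Rabs_pos_eq by lra; ring.
Qed.

Lemma continuity_edist_lerp U V F : continuity (fun t => edist (lerp U V t) F).
Proof.
  intro t; unfold edist, lerp; cbn [fst snd].
  apply continuity_pt_comp with (f2 := sqrt); [reg|].
  apply continuity_pt_sqrt, Rplus_le_le_0_compat; apply pow2_ge_0.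
Qed.

Lemma side_lerp P Q U V t :
  side P Q (lerp U V t) = side P Q U + t * (side P Q V - side P Q U).
Proof. unfold side, cross, vsub, lerp; cbn; ring. Qed.

Lemma affine_root_unit_interval s1 s2 : s1 * s2 <= 0 ->
  exists t, 0 <= t <= 1 /\ s1 + t * (s2 - s1) = 0.
Proof.
  intros Hs; destruct (Req_dec s1 s2) as [E|E].
  - exists 0; subst s2; split; nra.
  - exists (s1 / (s1 - s2)); split; [|field; lra].
    assert (0 < (s1 - s2) * (s1 - s2)) by (apply Rsqr_pos_lt; lra).
    split; apply Rmult_le_reg_r with ((s1 - s2) * (s1 - s2)); try lra;
      field_simplify; nra.
Qed.

Lemma segment_meets_line P Q U V : side P Q U * side P Q V <= 0 ->
  exists Z, on_line P Q Z /\ edist Z U + edist Z V = edist U V.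
Proof.
  intros Hs; destruct (affine_root_unit_interval _ _ Hs) as [t [Ht Hz]].
  exists (lerp U V t); split.
  - apply on_line_side; rewrite side_lerp; exact Hz.
  - now apply edist_lerp_segment.
Qed.

(** * Tangent lines to an ellipse *)

(* If a point Y of the line had focal sum < 2a, the focal sum along the ray from
   the point of tangency X through Y would reach 2a again beyond Y. *)
Lemma tangent_line_min P Q F1 F2 a : tangent_line P Q F1 F2 a ->
  forall Y, on_line P Q Y -> 2 * a <= edist Y F1 + edist Y F2.
Proof.
  intros [X [HX [HXe Huniq]]] Y HY.
  destruct (Rle_lt_dec (2 * a) (edist Y F1 + edist Y F2)) as [|Hlt]; [assumption|exfalso].
  unfold on_ellipse in HXe.
  assert (HXY : X <> Y) by (intros ->; lra).
  pose proof (edist_pos _ _ HXY) as Hd.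
  pose proof (edist_nonneg X F1); pose proof (edist_nonneg X F2).
  set (h t := edist (lerp X Y t) F1 + edist (lerp X Y t) F2 - 2 * a).
  set (T := 2 * a / edist X Y + 2).
  assert (HT : 1 < T) by (unfold T, Rdiv; pose proof (Rle_mult_inv_pos (2 * a) (edist X Y)); lra).
  assert (HTd : T * edist X Y = 2 * a + 2 * edist X Y) by (unfold T; field; lra).
  assert (Hh1 : h 1 < 0) by (unfold h; rewrite lerp_1; lra).
  assert (HhT : 0 < h T).
  { pose proof (edist_triangle (lerp X Y T) F1 X) as H1.
    pose proof (edist_triangle (lerp X Y T) F2 X) as H2.
    rewrite edist_lerp_l, Rabs_pos_eq, (edist_sym F1) in H1 by lra.
    rewrite edist_lerp_l, Rabs_pos_eq, (edist_sym F2) in H2 by lra.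
    unfold h; lra. }
  assert (Hc : continuity h).
  { apply continuity_minus; [apply continuity_plus|apply continuity_const; now intros ? ?];
      apply continuity_edist_lerp. }
  destruct (IVT h 1 T Hc HT Hh1 HhT) as [z [Hz Hhz]].
  assert (HZ : lerp X Y z = X).
  { apply Huniq.
    - rewrite on_line_side, side_lerp; rewrite on_line_side in HX, HY.
      rewrite HX, HY; ring.
    - unfold on_ellipse, h in *; lra. }
  pose proof (edist_lerp_l X Y z) as E.
  rewrite HZ, edist_refl, Rabs_pos_eq in E by lra; nra.
Qed.

Definition reflect (P Q X : point) : point :=
  let k := 2 * side P Q X / norm2 (vsub Q P) in
  (fst X + k * (snd Q - snd P), snd X - k * (fst Q - fst P)).

Section Reflection.

Variables P Q : point.
Hypothesis HPQ : P <> Q.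

Let norm2_PQ_neq0 : norm2 (vsub Q P) <> 0.
Proof. apply Rgt_not_eq, norm2_vsub_pos; auto. Qed.

Lemma side_reflect X : side P Q (reflect P Q X) = - side P Q X.
Proof.
  pose proof norm2_PQ_neq0; destruct P, Q, X;
    unfold reflect, side, norm2, cross, dot, vsub in *; cbn in *.
  field; auto.
Qed.

Lemma norm2_reflect U V :
  norm2 (vsub (reflect P Q U) V)
  = norm2 (vsub U V) + 4 * side P Q U * side P Q V / norm2 (vsub Q P).
Proof.
  pose proof norm2_PQ_neq0; destruct P, Q, U, V;
    unfold reflect, side, norm2, cross, dot, vsub in *; cbn in *.
  field; auto.
Qed.

Lemma edist_reflect X Z : on_line P Q Z -> edist (reflect P Q X) Z = edist X Z.
Proof.
  rewrite on_line_side; intros HZ.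
  rewrite !edist_norm2, norm2_reflect, HZ; f_equal; field; apply norm2_PQ_neq0.
Qed.

End Reflection.

(* Foci on opposite sides would put a point of the line inside the ellipse.
   Otherwise the segment from the mirror image W of F1 to F2 crosses the line, so
   the minimality of the focal sum on the line forces |W F2| = 2a, and
   norm2_reflect expands |W F2|^2. *)
Lemma tangent_focal_product P Q F1 F2 a : P <> Q -> is_ellipse F1 F2 a ->
  tangent_line P Q F1 F2 a ->
  4 * side P Q F1 * side P Q F2 = (4 * a * a - norm2 (vsub F1 F2)) * norm2 (vsub Q P).
Proof.
  intros HPQ Hell Htan; unfold is_ellipse in Hell.
  pose proof (tangent_line_min _ _ _ _ _ Htan) as Hmin.
  destruct (Rle_lt_dec (side P Q F1 * side P Q F2) 0) as [Hopp|Hsame].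
  - exfalso; destruct (segment_meets_line _ _ _ _ Hopp) as [Z [HZ HZd]].
    specialize (Hmin Z HZ); lra.
  - set (W := reflect P Q F1).
    assert (HW : side P Q W * side P Q F2 <= 0)
      by (unfold W; rewrite side_reflect by exact HPQ; nra).
    destruct (segment_meets_line _ _ _ _ HW) as [Z [HZ HZd]].
    assert (Hlow : 2 * a <= edist W F2).
    { rewrite <- HZd, (edist_sym Z W); unfold W; rewrite edist_reflect by auto.
      rewrite (edist_sym F1 Z); now apply Hmin. }
    destruct Htan as [X [HX [HXe _]]]; unfold on_ellipse in HXe.
    assert (Hup : edist W F2 <= 2 * a).
    { pose proof (edist_triangle W X F2) as Htri.
      unfold W in *; rewrite (edist_reflect P Q HPQ F1 X HX), (edist_sym F1) in Htri; lra. }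
    assert (E : edist W F2 * edist W F2 = 4 * a * a)
      by (replace (edist W F2) with (2 * a) by lra; ring).
    pose proof (norm2_vsub_pos _ _ (not_eq_sym HPQ)) as Hmm.
    unfold W in E; rewrite edist_sqr, norm2_reflect in E by auto.
    rewrite <- E; field; lra.
Qed.

(** * The triangle seen from the center of the ellipse *)

Lemma side_vsub P Q X O : side (vsub P O) (vsub Q O) (vsub X O) = side P Q X.
Proof. unfold side; now rewrite !vsub_vsub. Qed.

Lemma dotv_vsub V P Q O : dotv (vsub V O) (vsub P O) (vsub Q O) = dotv V P Q.
Proof. unfold dotv, vsub; cbn; ring. Qed.

Lemma vsub_center_r F1 F2 : vsub F2 (center F1 F2) = vopp (vsub F1 (center F1 F2)).
Proof. unfold vsub, vopp, center; cbn; f_equal; field. Qed.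

Lemma norm2_vsub_center F1 F2 : norm2 (vsub F1 F2) = 4 * norm2 (vsub F1 (center F1 F2)).
Proof. unfold norm2, dot, vsub, center; cbn; field. Qed.

Lemma linear_eccentricity_norm2 F1 F2 :
  linear_eccentricity F1 F2 = sqrt (norm2 (vsub F1 (center F1 F2))).
Proof.
  unfold linear_eccentricity; rewrite edist_norm2, norm2_vsub_center.
  rewrite sqrt_mult_alt by lra; replace 4 with (2 * 2) by ring.
  rewrite sqrt_square by lra; field.
Qed.

(* Tangency of the line z1 z2 to the ellipse with foci f and -f, where b2 stands
   for the squared semi-minor axis a^2 - |f|^2. *)
Definition focal_tangent (f : point) (b2 : R) (z1 z2 : point) : Prop :=
  side z1 z2 f * side z1 z2 (vopp f) = b2 * norm2 (vsub z2 z1).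

Lemma tangent_line_focal_tangent P Q F1 F2 a : P <> Q -> is_ellipse F1 F2 a ->
  tangent_line P Q F1 F2 a ->
  focal_tangent (vsub F1 (center F1 F2)) (a * a - norm2 (vsub F1 (center F1 F2)))
    (vsub P (center F1 F2)) (vsub Q (center F1 F2)).
Proof.
  intros HPQ Hell Htan; pose proof (tangent_focal_product _ _ _ _ _ HPQ Hell Htan) as E.
  unfold focal_tangent; rewrite <- vsub_center_r, !side_vsub, vsub_vsub.
  rewrite norm2_vsub_center in E; lra.
Qed.

(* In complex notation the left-hand side is Re (z1 z2 conj (f^2)) - r Re (z1 conj z2). *)
Lemma focal_tangent_chord z1 z2 f b2 r :
  norm2 z1 = r -> norm2 z2 = r -> z1 <> z2 -> focal_tangent f b2 z1 z2 ->
  dot (cmul z1 z2) (cmul f f) - r * dot z1 z2 = r * (r - norm2 f - 2 * b2).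
Proof.
  intros h1 h2 Hne Ht.
  pose proof (norm2_vsub_pos _ _ (not_eq_sym Hne)) as Hmm.
  apply (Rmult_eq_reg_l (norm2 (vsub z2 z1))); [|lra].
  destruct z1, z2, f;
    unfold focal_tangent, side, cross, norm2, dot, cmul, vsub, vopp in *; cbn in *.
  clear Hne Hmm; nsatz.
Qed.

Lemma tangent_line_chord_eqn P Q F1 F2 O a r :
  center F1 F2 = O -> P <> Q -> is_ellipse F1 F2 a -> tangent_line P Q F1 F2 a ->
  norm2 (vsub P O) = r -> norm2 (vsub Q O) = r ->
  dot (cmul (vsub P O) (vsub Q O)) (cmul (vsub F1 O) (vsub F1 O))
    - r * dot (vsub P O) (vsub Q O)
  = r * (r - norm2 (vsub F1 O) - 2 * (a * a - norm2 (vsub F1 O))).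
Proof.
  intros <- HPQ Hell Htan hP hQ.
  apply focal_tangent_chord; auto using vsub_inj, tangent_line_focal_tangent.
Qed.

Lemma orthogonal_pair_eq0 u v d :
  dot d u = 0 -> dot d v = 0 -> cross u v <> 0 -> d = (0, 0).
Proof.
  destruct u as [u1 u2], v as [v1 v2], d as [d1 d2]; unfold dot, cross; cbn.
  intros Hu Hv Hc; f_equal.
  - apply (Rmult_eq_reg_r (u1 * v2 - u2 * v1)); [|exact Hc].
    transitivity (v2 * (d1 * u1 + d2 * u2) - u2 * (d1 * v1 + d2 * v2)); [ring|].
    rewrite Hu, Hv; ring.
  - apply (Rmult_eq_reg_r (u1 * v2 - u2 * v1)); [|exact Hc].
    transitivity (u1 * (d1 * v1 + d2 * v2) - v1 * (d1 * u1 + d2 * u2)); [ring|].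
    rewrite Hu, Hv; ring.
Qed.

Lemma cmul_chords_cross z1 z2 z3 r :
  norm2 z1 = r -> norm2 z2 = r -> norm2 z3 = r ->
  cross (cmul z1 (vsub z2 z3)) (cmul z3 (vsub z1 z2)) = r * cross (vsub z2 z1) (vsub z3 z1).
Proof.
  destruct z1, z2, z3; unfold norm2, dot, cross, cmul, vsub; cbn; intros; nsatz.
Qed.

(* With w := -(z1 z2 + z2 z3 + z3 z1), the expression of focal_tangent_chord with
   f^2 replaced by w equals -r (r + z1.z2 + z2.z3 + z3.z1) for every side, so the
   difference d := f^2 - w is orthogonal to z1 (z2 - z3) and to z3 (z1 - z2). *)
Lemma focus_sq_of_chords z1 z2 z3 f r K :
  norm2 z1 = r -> norm2 z2 = r -> norm2 z3 = r ->
  cross (vsub z2 z1) (vsub z3 z1) <> 0 ->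
  dot (cmul z1 z2) (cmul f f) - r * dot z1 z2 = K ->
  dot (cmul z2 z3) (cmul f f) - r * dot z2 z3 = K ->
  dot (cmul z3 z1) (cmul f f) - r * dot z3 z1 = K ->
  cmul f f = vopp (vadd (vadd (cmul z1 z2) (cmul z2 z3)) (cmul z3 z1)).
Proof.
  intros h1 h2 h3 Hdet E12 E23 E31.
  assert (Hr : r <> 0).
  { intros ->; apply Hdet.
    rewrite (norm2_eq0 _ h1), (norm2_eq0 _ h2), (norm2_eq0 _ h3); unfold cross, vsub; cbn; ring. }
  set (d := vadd (cmul f f) (vadd (vadd (cmul z1 z2) (cmul z2 z3)) (cmul z3 z1))).
  assert (Hd : d = (0, 0)).
  { apply (orthogonal_pair_eq0 (cmul z1 (vsub z2 z3)) (cmul z3 (vsub z1 z2))).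
    - clear Hdet Hr; subst d; destruct z1, z2, z3, f;
        unfold norm2, dot, cmul, vadd, vsub in *; cbn in *; nsatz.
    - clear Hdet Hr; subst d; destruct z1, z2, z3, f;
        unfold norm2, dot, cmul, vadd, vsub in *; cbn in *; nsatz.
    - rewrite (cmul_chords_cross _ _ _ _ h1 h2 h3); now apply Rmult_integral_contrapositive. }
  revert Hd; subst d; destruct (cmul f f); unfold vadd, vopp; cbn; intros Hd.
  injection Hd as Hd1 Hd2; f_equal; lra.
Qed.

Lemma focal_norm_sq z1 z2 z3 f r K :
  norm2 z1 = r -> norm2 z2 = r -> norm2 z3 = r ->
  cross (vsub z2 z1) (vsub z3 z1) <> 0 ->
  dot (cmul z1 z2) (cmul f f) - r * dot z1 z2 = K ->
  dot (cmul z2 z3) (cmul f f) - r * dot z2 z3 = K ->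
  dot (cmul z3 z1) (cmul f f) - r * dot z3 z1 = K ->
  norm2 f * norm2 f = r * norm2 (vadd (vadd z1 z2) z3).
Proof.
  intros h1 h2 h3 Hdet E12 E23 E31.
  pose proof (focus_sq_of_chords _ _ _ _ _ _ h1 h2 h3 Hdet E12 E23 E31) as Hf.
  transitivity (norm2 (cmul f f)); [destruct f; unfold norm2, dot, cmul; cbn; ring|].
  rewrite Hf; clear Hf Hdet E12 E23 E31.
  destruct z1, z2, z3; unfold norm2, dot, cmul, vadd, vopp in *; cbn in *; nsatz.
Qed.

(* z1 + z2 + z3 is the orthocenter H; this is 8 cos A cos B cos C = 1 - OH^2 / R^2. *)
Lemma dotv_product_circle z1 z2 z3 r :
  norm2 z1 = r -> norm2 z2 = r -> norm2 z3 = r ->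
  2 * (dotv z1 z2 z3 * dotv z2 z3 z1 * dotv z3 z1 z2)
  = cross (vsub z2 z1) (vsub z3 z1) * cross (vsub z2 z1) (vsub z3 z1)
    * (r - norm2 (vadd (vadd z1 z2) z3)).
Proof.
  destruct z1, z2, z3; unfold norm2, dot, dotv, cross, vadd, vsub; cbn; intros; nsatz.
Qed.

Lemma circle_radius_pos z1 z2 r : norm2 z1 = r -> norm2 z2 = r -> z1 <> z2 -> 0 < r.
Proof.
  intros h1 h2 Hne; destruct (norm2_nonneg z1) as [|E]; [lra|].
  exfalso; apply Hne; rewrite (norm2_eq0 z1), (norm2_eq0 z2); congruence.
Qed.

Lemma dotv_add A B C : dotv A B C + dotv B C A = norm2 (vsub A B).
Proof. unfold dotv, norm2, dot, vsub; cbn; ring. Qed.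

Lemma noncollinear_neq A B C : noncollinear A B C -> A <> B /\ B <> C /\ C <> A.
Proof. unfold noncollinear; intros H; repeat split; intros ->; apply H; ring. Qed.

Lemma prod3_sign p q s : 0 < p + q -> 0 < q + s -> 0 < s + p ->
  (0 < p /\ 0 < q /\ 0 < s <-> 0 < p * q * s) /\
  (p < 0 \/ q < 0 \/ s < 0 <-> p * q * s < 0).
Proof.
  intros Hpq Hqs Hsp.
  destruct (Rle_lt_dec p 0) as [Hp|Hp];
    [|destruct (Rle_lt_dec q 0) as [Hq|Hq]; [|destruct (Rle_lt_dec s 0) as [Hs|Hs]]].
  - assert (0 < q * s) by nra; split; split; intros; nra.
  - assert (0 < p * s) by nra; split; split; intros; nra.
  - assert (0 < p * q) by nra; split; split; intros; nra.
  - assert (0 < p * q) by nra; split; split; intros; nra.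
Qed.

Lemma sign_sub_of_sq r c H : 0 < r -> 0 <= c -> c * c = r * H ->
  (0 < r - H <-> c < r) /\ (r - H < 0 <-> r < c).
Proof.
  intros Hr Hc E.
  assert (r * (r - H) = (r - c) * (r + c)) by (rewrite Rmult_minus_distr_l, <- E; ring).
  split; split; intros; nra.
Qed.

Lemma acute_obtuse_sign p q s D r c H :
  0 < p + q -> 0 < q + s -> 0 < s + p -> 0 < D -> 0 < r -> 0 <= c ->
  2 * (p * q * s) = D * (r - H) -> c * c = r * H ->
  (0 < p /\ 0 < q /\ 0 < s <-> c < r) /\ (p < 0 \/ q < 0 \/ s < 0 <-> r < c).
Proof.
  intros Hpq Hqs Hsp HD Hr Hc Hprod Hsq.
  destruct (prod3_sign p q s Hpq Hqs Hsp) as [-> ->].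
  destruct (sign_sub_of_sq r c H Hr Hc Hsq) as [<- <-].
  split; split; intros; nra.
Qed.

Lemma sqrt_lt_iff x y : 0 <= x -> sqrt x < sqrt y <-> x < y.
Proof. split; [apply sqrt_lt_0_alt | intros; now apply sqrt_lt_1_alt]. Qed.

Theorem corollary2p1 (A B C O F1 F2 : point) (a : R) :
  noncollinear A B C ->
  is_circumcenter A B C O ->
  is_ellipse F1 F2 a ->
  center F1 F2 = O ->
  circumscribed_about A B C F1 F2 a ->
  (acute_triangle A B C <-> edist O A > linear_eccentricity F1 F2) /\
  (obtuse_triangle A B C <-> edist O A < linear_eccentricity F1 F2).
Proof.
  intros Hnc [HOAB HOBC] Hell HO [TAB [TBC TCA]].
  destruct (noncollinear_neq _ _ _ Hnc) as [HAB [HBC HCA]].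
  set (r := norm2 (vsub A O)).
  assert (hB : norm2 (vsub B O) = r) by (symmetry; now apply norm2_eq_of_edist_eq).
  assert (hC : norm2 (vsub C O) = r) by (rewrite <- hB; now apply norm2_eq_of_edist_eq).
  assert (Hdet : cross (vsub (vsub B O) (vsub A O)) (vsub (vsub C O) (vsub A O)) <> 0)
    by now rewrite !vsub_vsub.
  pose proof (focal_norm_sq _ _ _ _ _ _ eq_refl hB hC Hdet
    (tangent_line_chord_eqn _ _ _ _ _ _ _ HO HAB Hell TAB eq_refl hB)
    (tangent_line_chord_eqn _ _ _ _ _ _ _ HO HBC Hell TBC hB hC)
    (tangent_line_chord_eqn _ _ _ _ _ _ _ HO HCA Hell TCA hC eq_refl)) as Hfoc.
  pose proof (dotv_product_circle _ _ _ _ eq_refl hB hC) as Hprod.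
  rewrite !dotv_vsub in Hprod.
  rewrite edist_norm2_rev, linear_eccentricity_norm2, HO.
  unfold acute_triangle, obtuse_triangle, Rgt; rewrite !sqrt_lt_iff by apply norm2_nonneg.
  refine (acute_obtuse_sign _ _ _ _ _ _ _ _ _ _ _ _ _ Hprod Hfoc).
  - rewrite dotv_add; now apply norm2_vsub_pos.
  - rewrite dotv_add; now apply norm2_vsub_pos.
  - rewrite dotv_add; now apply norm2_vsub_pos.
  - now apply Rsqr_pos_lt.
  - exact (circle_radius_pos _ _ _ eq_refl hB (vsub_inj _ _ _ HAB)).
  - apply norm2_nonneg.
Qed.
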